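(* Let $k\ge2$ be an integer and $\mathbb{F}$ a finite field. There is a black-box transformation with parameters $(t=1,k,k_0=2,\ell=k-1,\mathbb{F})$ and rate $1-1/k$, in which $c_j=k-1$ for every $j\in[k]$.
   Context: A $k$-party $\ell$-LMSSS over $\mathbb{F}$: an $\mathbb{F}$-linear map $\mathsf{Share}:\mathbb{F}^\ell\times\mathbb{F}^e\to\mathbb{F}^{b_1}\times\dots\times\mathbb{F}^{b_k}$ together with an access structure (sets that can linearly recover the secret) and adversary structure (sets whose shares, under uniform randomness, are distributed independently of the secret); information rate $\ell/\sum_jb_j$. Black-box transformation with parameters $(t,k,k_0,\ell,\mathbb{F})$: a $k$-party $\ell$-LMSSS $\mathcal{L}=(\mathsf{Share}_\mathcal{L},\mathsf{Rec}_\mathcal{L})$ over $\mathbb{F}$ with parameters $(e,b_1,\dots,b_k)$ (all $k$ parties together qualified), replication functions $\psi_i:[k_0]\to2^{[k]}$ ($i\in[\ell]$) and conversion functions $\varphi_j:\mathbb{F}^{c_j}\to\mathbb{F}^{b_j}$, $c_j=\sum_{i=1}^\ell|\{v\in[k_0]:j\in\psi_i(v)\}|$, such that for every $(y_i^{(v)})_{i\in[\ell],v\in[k_0]}$ there is $\mathbf{r}$ with $(\varphi_j(\mathbf{Y}(j)))_{j}=\mathsf{Share}_\mathcal{L}((\sum_vy_1^{(v)},\dots,\sum_vy_\ell^{(v)}),\mathbf{r})$, where $\mathbf{Y}(j)=(y_i^{(v)})_{i,v:\,j\in\psi_i(v)}$; and for every $T\subseteq[k]$ with $|T|\le t$ and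 every $i$, $|\bigcup_{j\in T}\{v:j\in\psi_i(v)\}|\le k_0-1$. Its rate is the information rate of $\mathcal{L}$. *)

From HB Require Import structures.
From mathcomp Require Import all_boot all_order all_algebra.
Set Implicit Arguments. Unset Strict Implicit. Unset Printing Implicit Defensive.
Import Order.TTheory GRing.Theory Num.Theory.
Local Open Scope ring_scope.

Definition shares (F : finFieldType) (k : nat) (b : 'I_k -> nat) :=
  forall j : 'I_k, 'rV[F]_(b j).

Definition share_linear (F : finFieldType) (k l e : nat) (b : 'I_k -> nat)
  (Share : 'rV[F]_l -> 'rV[F]_e -> shares F b) : Prop :=
  forall (a : F) (s1 s2 : 'rV[F]_l) (r1 r2 : 'rV[F]_e) (j : 'I_k),
    Share (a *: s1 + s2) (a *: r1 + r2) j = a *: Share s1 r1 j + Share s2 r2 j.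

Definition qualified (F : finFieldType) (k l e : nat) (b : 'I_k -> nat)
  (Share : 'rV[F]_l -> 'rV[F]_e -> shares F b) (A : {set 'I_k}) : Prop :=
  exists Rec : shares F b -> 'rV[F]_l,
    [/\ (forall (a : F) (x y : shares F b),
           Rec (fun j => a *: x j + y j) = a *: Rec x + Rec y),
        (forall x y : shares F b, (forall j, j \in A -> x j = y j) -> Rec x = Rec y)
      & (forall s r, Rec (Share s r) = s)].

(* A set A is in the adversary structure: under uniform randomness, the shares
   of A are distributed independently of the secret. *)
Definition unauthorized (F : finFieldType) (k l e : nat) (b : 'I_k -> nat)
  (Share : 'rV[F]_l -> 'rV[F]_e -> shares F b) (A : {set 'I_k}) : Prop :=
  forall (s s' : 'rV[F]_l) (v : shares F b),
    #|[pred r : 'rV[F]_e | [forall j in A, Share s r j == v j]]| =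
    #|[pred r : 'rV[F]_e | [forall j in A, Share s' r j == v j]]|.

Definition LMSSS (F : finFieldType) (k l e : nat) (b : 'I_k -> nat)
  (Share : 'rV[F]_l -> 'rV[F]_e -> shares F b) : Prop :=
  share_linear Share.

Definition info_rate (k l : nat) (b : 'I_k -> nat) : rat :=
  (l%:R / (\sum_(j < k) b j)%:R)%R.

Definition recv_idx (k l k0 : nat) (psi : 'I_l -> 'I_k0 -> {set 'I_k})
  (j : 'I_k) := {p : 'I_l * 'I_k0 | j \in psi p.1 p.2}.

Definition c_j (k l k0 : nat) (psi : 'I_l -> 'I_k0 -> {set 'I_k}) (j : 'I_k) : nat :=
  (\sum_(i < l) #|[set v : 'I_k0 | j \in psi i v]|)%N.

Definition Yj (F : finFieldType) (k l k0 : nat) (psi : 'I_l -> 'I_k0 -> {set 'I_k})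
  (y : 'I_l -> 'I_k0 -> F) (j : 'I_k) : {ffun recv_idx psi j -> F} :=
  [ffun p : recv_idx psi j => y (val p).1 (val p).2].

Definition black_box_transformation (F : finFieldType) (t k k0 l : nat)
  (e : nat) (b : 'I_k -> nat)
  (Share : 'rV[F]_l -> 'rV[F]_e -> shares F b)
  (psi : 'I_l -> 'I_k0 -> {set 'I_k})
  (phi : forall j : 'I_k, {ffun recv_idx psi j -> F} -> 'rV[F]_(b j)) : Prop :=
  [/\ LMSSS Share,
      qualified Share [set: 'I_k],
      (forall y : 'I_l -> 'I_k0 -> F, exists r : 'rV[F]_e,
          forall j : 'I_k,
            phi j (@Yj F k l k0 psi y j) = Share (\row_(i < l) \sum_(v < k0) y i v) r j)
    & (forall T : {set 'I_k}, (#|T| <= t)%N -> forall i : 'I_l,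
          (#|\bigcup_(j in T) [set v : 'I_k0 | j \in psi i v]| <= k0 - 1)%N)].

From mathcomp Require Import all_boot all_order all_algebra.
From mathcomp Require Import ring.
Set Implicit Arguments. Unset Strict Implicit. Unset Printing Implicit Defensive.
Import Order.TTheory GRing.Theory Num.Theory.
Local Open Scope ring_scope.

(* The k-th party holds a uniform mask r and every other party j holds s_j - r,
   so all parties together recover s.  Each secret s_i is given to the
   transformation as two additive pieces y_i^(0) + y_i^(1): the piece y_i^(0)
   goes to party i only, the piece y_i^(1) to every other party.  With
   r := sum_i y_i^(1), party i computes s_i - r = y_i^(0) - sum_(i' != i) y_i'^(1)
   from what it received, and the k-th party computes r.  A single party sees
   exactly one piece of each secret, which is the privacy condition for t = 1. *)

Section ReplicationBySelector.
Variables (k l k0 : nat) (sel : 'I_l -> 'I_k -> 'I_k0).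

Definition replicate_by : 'I_l -> 'I_k0 -> {set 'I_k} :=
  fun i v => [set j | sel i j == v].

Lemma received_pieces_replicate_by (i : 'I_l) (j : 'I_k) :
  [set v | j \in replicate_by i v] = [set sel i j].
Proof. by apply/setP => v; rewrite !inE eq_sym. Qed.

Lemma c_j_replicate_by (j : 'I_k) : c_j replicate_by j = l.
Proof.
rewrite /c_j (eq_bigr (fun=> 1%N)) ?sum_nat_const ?card_ord ?muln1 // => i _.
by rewrite received_pieces_replicate_by cards1.
Qed.

Lemma card_received_pieces_replicate_by_le1 (T : {set 'I_k}) (i : 'I_l) :
  (#|T| <= 1)%N ->
  (#|\bigcup_(j in T) [set v | j \in replicate_by i v]| <= 1)%N.
Proof.
move=> /card_le1_eqP T1; apply/card_le1_eqP => v1 v2.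
move=> /bigcupP[j1 Tj1]; rewrite received_pieces_replicate_by inE => /eqP ->.
move=> /bigcupP[j2 Tj2]; rewrite received_pieces_replicate_by inE => /eqP ->.
by rewrite (T1 _ _ Tj1 Tj2).
Qed.

Lemma mem_replicate_by_sel (i : 'I_l) (j : 'I_k) : j \in replicate_by i (sel i j).
Proof. by rewrite inE. Qed.

Definition recv_at (j : 'I_k) (i : 'I_l) : recv_idx replicate_by j :=
  exist _ (i, sel i j) (mem_replicate_by_sel i j).

Lemma Yj_recv_at (F : finFieldType) (y : 'I_l -> 'I_k0 -> F) j i :
  Yj replicate_by y j (recv_at j i) = y i (sel i j).
Proof. by rewrite ffunE. Qed.

End ReplicationBySelector.

Section MaskedAdditiveScheme.
Variables (n : nat) (F : finFieldType).

Definition unit_share_size : 'I_n.+2 -> nat := fun=> 1%N.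

Definition masked_share (s : 'rV[F]_n.+1) (r : 'rV[F]_1) :
    shares F unit_share_size :=
  fun j => \row_(_ < 1)
    if unlift ord_max j is Some i then s 0 i - r 0 0 else r 0 0.

Lemma masked_share_linear : share_linear masked_share.
Proof.
move=> a s1 s2 r1 r2 j; apply/rowP => z; rewrite !mxE.
by case: unliftP => [i _|_]; rewrite ?mxE // mulrBr addrACA opprD.
Qed.

Lemma masked_share_all_qualified : qualified masked_share [set: 'I_n.+2].
Proof.
exists (fun x => \row_i (x (lift ord_max i) 0 0 + x ord_max 0 0)); split.
- by move=> a x y; apply/rowP => i; rewrite !mxE mulrDr addrACA.
- by move=> x y xy; apply/rowP => i; rewrite !mxE !xy ?inE.
- by move=> s r; apply/rowP => i; rewrite !mxE liftK unlift_none subrK.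
Qed.

Definition piece_of (i : 'I_n.+1) (j : 'I_n.+2) : 'I_2 :=
  if j == lift ord_max i then ord0 else ord_max.

Local Notation psi := (replicate_by piece_of).

Definition masked_convert (j : 'I_n.+2) (f : {ffun recv_idx psi j -> F}) :
    'rV[F]_(unit_share_size j) :=
  \row_(_ < 1) if unlift ord_max j is Some i0
    then f (recv_at piece_of j i0) - \sum_(i | i != i0) f (recv_at piece_of j i)
    else \sum_i f (recv_at piece_of j i).

Lemma masked_convert_shares_sum (y : 'I_n.+1 -> 'I_2 -> F) :
  let r := \row_(_ < 1) \sum_i y i ord_max in
  forall j, masked_convert (Yj psi y j) =
            masked_share (\row_i \sum_(v < 2) y i v) r j.
Proof.
move=> r j; apply/rowP => z; rewrite !mxE.
case: unliftP => [i0 ->|->].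
- rewrite [in RHS](bigD1 i0) //= !mxE big_ord_recr big_ord1 opprD addrA addrK.
  rewrite Yj_recv_at /piece_of eqxx; congr (_ - _); first exact/congr1/val_inj.
  apply: eq_bigr => i ne_i_i0.
  by rewrite Yj_recv_at (inj_eq lift_inj) eq_sym (negbTE ne_i_i0).
- apply: eq_bigr => i _; rewrite Yj_recv_at /piece_of.
  by have /negbTE -> : ord_max != lift ord_max i by apply: neq_lift.
Qed.

Lemma masked_scheme_rate :
  info_rate n.+1 unit_share_size = 1 - 1 / n.+2%:R :> rat.
Proof.
rewrite /info_rate sum_nat_const card_ord muln1.
by field; rewrite -natrD pnatr_eq0.
Qed.

End MaskedAdditiveScheme.

Theorem mainTheorem13 (k : nat) (F : finFieldType) : (2 <= k)%N ->
  exists (e : nat) (b : 'I_k -> nat)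
         (Share : 'rV[F]_(k.-1) -> 'rV[F]_e -> shares F b)
         (psi : 'I_(k.-1) -> 'I_2 -> {set 'I_k})
         (phi : forall j : 'I_k, {ffun recv_idx psi j -> F} -> 'rV[F]_(b j)),
    [/\ @black_box_transformation F 1 k 2 k.-1 e b Share psi phi,
        @info_rate k k.-1 b = 1 - 1 / k%:R :> rat
      & forall j : 'I_k, c_j psi j = k.-1].
Proof.
case: k => [|[|n]] // _.
exists 1%N, (@unit_share_size n), (@masked_share n F), (replicate_by (@piece_of n)),
  (@masked_convert n F).
split; [split | exact: masked_scheme_rate | exact: c_j_replicate_by].
- exact: masked_share_linear.
- exact: masked_share_all_qualified.
- by move=> y; eexists; apply: masked_convert_shares_sum.
- by move=> T T1 i; apply: card_received_pieces_replicate_by_le1.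
Qed.
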